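(* Let $X$ be an irreducible homogeneous Markov chain on a finite state space $\overline{F}$ with transition matrix $r$ and unique stationary distribution $\eta=(\eta_j:j\in\overline{F})$, and let $\boldsymbol{\alpha}=(\alpha_j:j\in\overline{F})\in[0,1]^{\overline{F}}$ be non-zero. Let $X^{(\boldsymbol{\alpha})}$ be the Markov chain obtained from $X$ by randomized skipping with acceptance probabilities $\boldsymbol{\alpha}$, with transition matrix $r^{(\boldsymbol{\alpha})}=(I-rI_{(1-\boldsymbol{\alpha})})^{-1}rI_{\boldsymbol{\alpha}}$. Then $X^{(\boldsymbol{\alpha})}$ has the unique stationary distribution \[ \eta^{(\boldsymbol{\alpha})}=\big(C^{(\boldsymbol{\alpha})}\big)^{-1}(\eta_j\alpha_j:j\in\overline{F}),\qquad C^{(\boldsymbol{\alpha})}=\sum_{j\in\overline{F}}\eta_j\alpha_j, \] and $\eta^{(\boldsymbol{\alpha})}$ has support $\overline{F}\setminus B(\boldsymbol{\alpha})$, where $B(\boldsymbol{\alpha})=\{j\in\overline{F}:\alpha_j=0\}$.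
   Context: $I_{\boldsymbol{\alpha}}$ and $I_{(1-\boldsymbol{\alpha})}$ are the diagonal matrices indexed by $\overline{F}$ with diagonal entries $\alpha_j$, resp. $1-\alpha_j$; $I$ is the identity matrix. Randomized skipping: from current state $i$ a destination $j$ is proposed with probability $r(i,j)$ and accepted, independently of the past given $j$, with probability $\alpha_j$; if accepted the chain moves to $j$; if rejected, the walker makes an imaginary jump to $j$ taking no time and immediately proposes a new destination from row $j$ of $r$, which is again accepted with the corresponding acceptance probability, and so on until a proposal is accepted. *)

(* State space \overline{F} = 'I_n.+1 (finite, nonempty). *)
From HB Require Import structures.
From mathcomp Require Import all_boot all_order all_algebra.
Set Implicit Arguments. Unset Strict Implicit. Unset Printing Implicit Defensive.
Import Order.TTheory GRing.Theory Num.Theory.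
Local Open Scope ring_scope.

Section Defs.
Variables (R : realFieldType) (n : nat).

Definition stochastic (P : 'M[R]_n.+1) : Prop :=
  (forall i j, 0 <= P i j) /\ (forall i, \sum_j P i j = 1).

Definition distribution (v : 'rV[R]_n.+1) : Prop :=
  (forall j, 0 <= v 0 j) /\ \sum_j v 0 j = 1.

Definition stationary (P : 'M[R]_n.+1) (v : 'rV[R]_n.+1) : Prop :=
  distribution v /\ v *m P = v.

Definition irreducible (P : 'M[R]_n.+1) : Prop :=
  forall i j, exists k : nat, 0 < (P ^+ k) i j.

Definition I_one_minus (a : 'rV[R]_n.+1) : 'M[R]_n.+1 :=
  diag_mx (\row_j (1 - a 0 j)).
Definition I_alpha (a : 'rV[R]_n.+1) : 'M[R]_n.+1 := diag_mx a.

Definition skip_matrix (r : 'M[R]_n.+1) (a : 'rV[R]_n.+1) : 'M[R]_n.+1 :=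
  invmx (1%:M - r *m I_one_minus a) *m r *m I_alpha a.

Definition C_alpha (eta a : 'rV[R]_n.+1) : R := \sum_j eta 0 j * a 0 j.

Definition eta_alpha (eta a : 'rV[R]_n.+1) : 'rV[R]_n.+1 :=
  (C_alpha eta a)^-1 *: \row_j (eta 0 j * a 0 j).

End Defs.

(* Everything rests on one vanishing fact: a nonnegative vector v with
   v_j <= (1 - alpha_j) (v r)_j is zero, since such a v is r-invariant, hence
   a multiple of eta by irreducibility, and a state with alpha_j > 0 kills the
   multiple.
   Applied to the negative part of z, this shows that z (I - r I_{(1-alpha)})
   >= 0 forces z >= 0, so I - r I_{(1-alpha)} is invertible with a
   nonnegative inverse.  Stationarity is the identity
   eta (I - r I_{(1-alpha)}) = eta I_alpha, and if pi is stationary for the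
   skipped chain then pi (I - r I_{(1-alpha)})^{-1} is r-invariant, hence a
   multiple of eta. *)

From mathcomp Require Import all_boot all_order all_algebra.
Import Order.TTheory GRing.Theory Num.Theory.
Local Open Scope ring_scope.
Set Implicit Arguments.
Unset Strict Implicit.

Section Diagonals.
Variables (R : realFieldType) (n : nat) (a : 'rV[R]_n.+1).

Lemma mulmx_I_one_minus m (x : 'M[R]_(m, n.+1)) i j :
  (x *m I_one_minus a) i j = x i j * (1 - a 0 j).
Proof. by rewrite mul_mx_diag !mxE. Qed.

Lemma mulmx_I_alpha m (x : 'M[R]_(m, n.+1)) i j :
  (x *m I_alpha a) i j = x i j * a 0 j.
Proof. by rewrite mul_mx_diag !mxE. Qed.

Lemma I_alpha_add_one_minus : I_alpha a + I_one_minus a = 1%:M.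
Proof.
apply/matrixP => i j; rewrite !mxE.
by case: eqP => _; rewrite ?mulr1n ?mulr0n ?addr0 // addrC subrK.
Qed.

Lemma eta_alphaE (eta : 'rV[R]_n.+1) :
  eta_alpha eta a = (C_alpha eta a)^-1 *: (eta *m I_alpha a).
Proof. by congr (_ *: _); apply/rowP => j; rewrite mulmx_I_alpha mxE. Qed.

End Diagonals.

Section IrreducibleChain.
Variables (R : realFieldType) (n : nat) (r : 'M[R]_n.+1).
Hypotheses (hr : stochastic r) (hirr : irreducible r).

Lemma stochastic_expr_ge0 k i j : 0 <= (r ^+ k) i j.
Proof.
elim: k i j => [|k IH] i j; first by rewrite expr0 mxE ler0n.
rewrite exprS -mulmxE mxE; apply: sumr_ge0 => l _.
by apply: mulr_ge0; [exact: hr.1 | exact: IH].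
Qed.

Lemma mulmx_stochastic_ge0 (x : 'rV[R]_n.+1) j :
  (forall i, 0 <= x 0 i) -> 0 <= (x *m r) 0 j.
Proof.
move=> hx; rewrite mxE; apply: sumr_ge0 => i _.
by apply: mulr_ge0 => //; exact: hr.1.
Qed.

Lemma sum_mulmx_stochastic (x : 'rV[R]_n.+1) :
  \sum_j (x *m r) 0 j = \sum_j x 0 j.
Proof.
under eq_bigr do rewrite mxE.
by rewrite exchange_big; apply: eq_bigr => i _; rewrite -mulr_sumr hr.2 mulr1.
Qed.

Lemma stochastic_mulmx_const : r *m const_mx 1 = const_mx 1 :> 'cV[R]_n.+1.
Proof.
apply/colP => i; rewrite !mxE -[RHS](hr.2 i).
by apply: eq_bigr => j _; rewrite mxE mulr1.
Qed.

Lemma sub_invariant (x : 'rV[R]_n.+1) :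
  (forall j, x 0 j <= (x *m r) 0 j) -> x *m r = x.
Proof.
move=> hx; have hsum : \sum_j ((x *m r) 0 j - x 0 j) = 0.
  by rewrite sumrB sum_mulmx_stochastic subrr.
apply/rowP => j; apply/eqP; rewrite -subr_eq0; apply/eqP.
by apply: (psumr_eq0P _ hsum) => // i _; rewrite subr_ge0.
Qed.

(* Irreducibility enters only here: a zero of an invariant nonnegative vector
   propagates backwards along paths to every state. *)
Lemma invariant_ge0_eq0 (x : 'rV[R]_n.+1) i :
  (forall j, 0 <= x 0 j) -> x *m r = x -> x 0 i = 0 -> x = 0.
Proof.
move=> hx hxr hxi.
have hxk k : x *m r ^+ k = x.
  elim: k => [|k IHk]; first by rewrite expr0 mulmx1.
  by rewrite exprSr -mulmxE mulmxA IHk hxr.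
apply/rowP => j; rewrite mxE; have [k hk] := hirr j i.
have : x 0 j * (r ^+ k) j i <= (x *m r ^+ k) 0 i.
  rewrite mxE (bigD1 j) //= lerDl; apply: sumr_ge0 => l _.
  exact: mulr_ge0 (hx l) (stochastic_expr_ge0 k l i).
rewrite hxk hxi pmulr_lle0 // => hxj.
by apply/eqP; rewrite eq_le hxj hx.
Qed.

Context {eta : 'rV[R]_n.+1}.
Hypothesis heta : stationary r eta.

Lemma stationary_gt0 j : 0 < eta 0 j.
Proof.
rewrite lt_def heta.1.1 andbT; apply/eqP => hj.
have := heta.1.2; rewrite (invariant_ge0_eq0 heta.1.1 heta.2 hj).
rewrite (eq_bigr (fun=> 0)) ?big1 // => [/eqP|j' _]; last by rewrite mxE.
by rewrite eq_sym oner_eq0.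
Qed.

(* Subtract from [w] the largest multiple of [eta] lying below it; the
   remainder is invariant, nonnegative and vanishes at the minimising state. *)
Lemma invariant_scale_stationary (w : 'rV[R]_n.+1) :
  w *m r = w -> exists c, w = c *: eta.
Proof.
move=> hwr; set F := fun j => w 0 j / eta 0 j.
have [i _ hmin] := arg_minP F (isT : predT ord0).
exists (F i); set x := w - F i *: eta.
have hx j : 0 <= x 0 j.
  by rewrite !mxE subr_ge0 -ler_pdivlMr ?stationary_gt0 //; exact: hmin.
have hxi : x 0 i = 0 by rewrite !mxE divfK ?subrr // lt0r_neq0 ?stationary_gt0.
have hxr : x *m r = x by rewrite mulmxBl hwr -scalemxAl heta.2.
by apply/eqP; rewrite -subr_eq0 -/x (invariant_ge0_eq0 hx hxr hxi).
Qed.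

Section Skipping.
Context {a : 'rV[R]_n.+1}.
Hypotheses (ha : forall j, 0 <= a 0 j <= 1) (ha0 : a != 0).

Local Notation M := (1%:M - r *m I_one_minus a).

Lemma exists_alpha_gt0 : exists j, 0 < a 0 j.
Proof.
have /existsP[j hj] : [exists j, a 0 j != 0].
  apply: contraNT ha0 => /existsPn ha_eq0.
  by apply/eqP/rowP => j; rewrite mxE; apply/eqP/negbNE/ha_eq0.
by exists j; rewrite lt_def hj (andP (ha j)).1.
Qed.

Lemma subharmonic_eq0 (v : 'rV[R]_n.+1) :
  (forall j, 0 <= v 0 j) -> (forall j, v 0 j <= (1 - a 0 j) * (v *m r) 0 j) ->
  v = 0.
Proof.
move=> hv hsub.
have hvr : v *m r = v.
  apply: sub_invariant => j; apply: le_trans (hsub j) _.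
  by rewrite ler_piMl ?mulmx_stochastic_ge0 // gerBl (andP (ha j)).1.
have [c hc] := invariant_scale_stationary hvr.
have [j0 hj0] := exists_alpha_gt0.
have hvj0 : v 0 j0 = 0.
  have := hsub j0; rewrite hvr mulrBl mul1r lerBrDr gerDl pmulr_rle0 // => hle0.
  by apply/eqP; rewrite eq_le hle0 hv.
move: hvj0; rewrite hc mxE => /eqP.
rewrite mulf_eq0 (gt_eqF (stationary_gt0 j0)) orbF => /eqP ->.
by rewrite scale0r.
Qed.

Lemma resolvent_inverse_positive (z : 'rV[R]_n.+1) :
  (forall j, 0 <= (z *m M) 0 j) -> forall j, 0 <= z 0 j.
Proof.
move=> hz; set v := \row_j Num.max 0 (- z 0 j).
have hv j : 0 <= v 0 j by rewrite mxE le_max lexx.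
have hzv j : - z 0 j <= v 0 j by rewrite mxE le_max lexx orbT.
suff v0 : v = 0 by move=> j; have := hzv j; rewrite v0 mxE oppr_le0.
apply: subharmonic_eq0 => // j; rewrite [v 0 j]mxE ge_max.
have ha1 : 0 <= 1 - a 0 j by rewrite subr_ge0 (andP (ha j)).2.
rewrite mulr_ge0 ?mulmx_stochastic_ge0 //=.
apply: (@le_trans _ _ ((1 - a 0 j) * - (z *m r) 0 j)).
  have := hz j; rewrite mulmxBr mulmx1 mulmxA 2!mxE mulmx_I_one_minus.
  by rewrite subr_ge0 mulrN lerNl opprK mulrC.
rewrite ler_wpM2l // !mxE -sumrN; apply: ler_sum => i _.
by rewrite -mulNr ler_wpM2r //; exact: hr.1.
Qed.

Lemma resolvent_unit : M \in unitmx.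
Proof.
rewrite -row_free_unit -kermx_eq0; apply/eqP/row_matrixP => i; rewrite row0.
set u := row i (kermx M).
have huM : u *m M = 0 by apply/eqP; rewrite -sub_kermx row_sub.
have hge (z : 'rV[R]_n.+1) : z *m M = 0 -> forall j, 0 <= z 0 j.
  move=> hzM j; apply: (resolvent_inverse_positive _ j) => k.
  by rewrite hzM mxE.
apply/rowP => j; rewrite [RHS]mxE; apply/eqP; rewrite eq_le (hge _ huM) andbT.
have hNuM : (- u) *m M = 0 by rewrite mulNmx huM oppr0.
by have := hge _ hNuM j; rewrite mxE oppr_ge0.
Qed.

Lemma resolvent_inv_ge0 i j : 0 <= invmx M i j.
Proof.
have := @resolvent_inverse_positive (row i (invmx M)) _ j.
rewrite mxE; apply=> k.
by rewrite -row_mul mulVmx ?resolvent_unit // row1 mxE ler0n.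
Qed.

Lemma resolvent_mulmx_const :
  M *m const_mx 1 = r *m (I_alpha a *m const_mx 1) :> 'cV[R]_n.+1.
Proof.
rewrite mulmxBl mul1mx -[X in X - _]stochastic_mulmx_const -!mulmxA -mulmxBr.
by rewrite -[X in X - _]mul1mx -mulmxBl -(I_alpha_add_one_minus a) addrK.
Qed.

Lemma skip_matrix_stochastic : stochastic (skip_matrix r a).
Proof.
split=> [i j|i].
  rewrite mulmx_I_alpha mulr_ge0 ?(andP (ha j)).1 // mxE.
  apply: sumr_ge0 => k _.
  by rewrite mulr_ge0 ?resolvent_inv_ge0 //; exact: hr.1.
have : (skip_matrix r a *m const_mx 1 : 'cV[R]_n.+1) i 0 = 1.
  rewrite /skip_matrix -!mulmxA -resolvent_mulmx_const mulmxA.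
  by rewrite mulVmx ?resolvent_unit // mul1mx mxE.
by rewrite mxE => <-; apply: eq_bigr => j _; rewrite !mxE mulr1.
Qed.

Lemma C_alpha_gt0 : 0 < C_alpha eta a.
Proof.
have [j0 hj0] := exists_alpha_gt0.
rewrite /C_alpha (bigD1 j0) //= ltr_pwDl ?mulr_gt0 ?stationary_gt0 //.
apply: sumr_ge0 => j _.
by rewrite mulr_ge0 ?(ltW (stationary_gt0 j)) ?(andP (ha j)).1.
Qed.

Lemma stationary_skip : stationary (skip_matrix r a) (eta_alpha eta a).
Proof.
have hC := C_alpha_gt0.
have hetaM : eta *m M = eta *m I_alpha a.
  rewrite mulmxBr mulmx1 mulmxA heta.2 -{1}(mulmx1 eta).
  by rewrite -(I_alpha_add_one_minus a) mulmxDr addrK.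
split; last first.
  rewrite eta_alphaE -scalemxAl -{1}hetaM !mulmxA mulmxK ?resolvent_unit //.
  by rewrite heta.2.
split=> [j|].
  rewrite !mxE !mulr_ge0 ?invr_ge0 ?(ltW hC) ?(andP (ha j)).1 //.
  exact: ltW (stationary_gt0 j).
under eq_bigr do rewrite !mxE.
by rewrite -mulr_sumr mulVf ?lt0r_neq0.
Qed.

Lemma skip_stationary_unique pi :
  stationary (skip_matrix r a) pi -> pi = eta_alpha eta a.
Proof.
move=> [[_ hpi1] hpiS]; set w := pi *m invmx M.
have hwM : w *m M = pi by rewrite mulmxKV ?resolvent_unit.
have hpi : pi = w *m r *m I_alpha a by rewrite -{1}hpiS !mulmxA.
have hwr : w *m r = w.
  move/eqP: hwM; rewrite mulmxBr mulmx1 hpi mulmxA subr_eq -mulmxDr.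
  by rewrite I_alpha_add_one_minus mulmx1 => /eqP/esym.
have [c hc] := invariant_scale_stationary hwr.
have hpic : pi = c *: (eta *m I_alpha a) by rewrite hpi hc -!scalemxAl heta.2.
have hcC : c = (C_alpha eta a)^-1.
  have hC0 := lt0r_neq0 C_alpha_gt0.
  apply: (mulIf hC0); rewrite mulVf // -hpi1 hpic /C_alpha mulr_sumr.
  by apply: eq_bigr => j _; rewrite mxE mulmx_I_alpha.
by rewrite hpic hcC eta_alphaE.
Qed.

Lemma eta_alpha_eq0 j : (eta_alpha eta a 0 j == 0) = (a 0 j == 0).
Proof.
rewrite !mxE !mulf_eq0 invr_eq0 (gt_eqF C_alpha_gt0).
by rewrite (gt_eqF (stationary_gt0 j)).
Qed.

End Skipping.
End IrreducibleChain.

Theorem theorem2p6 (R : realFieldType) (n : nat)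
  (r : 'M[R]_n.+1) (eta a : 'rV[R]_n.+1)
  (hr : stochastic r) (hirr : irreducible r) (heta : stationary r eta)
  (ha : forall j, 0 <= a 0 j <= 1) (ha0 : a != 0) :
  (1%:M - r *m I_one_minus a) \in unitmx /\
  stochastic (skip_matrix r a) /\
  stationary (skip_matrix r a) (eta_alpha eta a) /\
  (forall pi, stationary (skip_matrix r a) pi -> pi = eta_alpha eta a) /\
  (forall j, eta_alpha eta a 0 j != 0 <-> a 0 j != 0).
Proof.
split; first exact (resolvent_unit hr hirr heta ha ha0).
split; first exact (skip_matrix_stochastic hr hirr heta ha ha0).
split; first exact (stationary_skip hr hirr heta ha ha0).
split; first exact (skip_stationary_unique hr hirr heta ha ha0).
by move=> j; rewrite (eta_alpha_eq0 hr hirr heta ha ha0).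
Qed.
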